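(* Every Abel sequentially compact subset of $\mathbb{R}$ is $\delta$-ward compact.
   Context: A sequence $(p_n)_{n\ge0}$ is Abel convergent to $\ell$ if $\sum_{k=0}^{\infty}p_k x^k$ converges for every $0\le x<1$ and $\lim_{x\to 1^-}(1-x)\sum_{k=0}^{\infty}p_k x^k=\ell$. A subset $F\subseteq\mathbb{R}$ is Abel sequentially compact if every sequence of points of $F$ has a subsequence Abel convergent to a limit belonging to $F$. A sequence $(p_n)$ is $\delta$-quasi-Cauchy if $\lim_{n\to\infty}\big((p_{n+2}-p_{n+1})-(p_{n+1}-p_n)\big)=0$, i.e. the sequence of differences $(p_{n+1}-p_n)$ is quasi-Cauchy. A subset $E\subseteq\mathbb{R}$ is $\delta$-ward compact if every sequence of points of $E$ has a $\delta$-quasi-Cauchy subsequence. *)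

From Stdlib Require Import Reals.
From Coquelicot Require Import Coquelicot.
Open Scope R_scope.

Definition subseq_index (phi : nat -> nat) : Prop :=
  forall n, (phi n < phi (S n))%nat.

Definition abel_convergent (p : nat -> R) (l : R) : Prop :=
  (forall x, 0 <= x < 1 -> ex_series (fun k => p k * x ^ k)) /\
  filterlim (fun x => (1 - x) * Series (fun k => p k * x ^ k))
            (at_left 1) (locally l).

Definition abel_seq_compact (F : R -> Prop) : Prop :=
  forall p : nat -> R, (forall n, F (p n)) ->
    exists phi, subseq_index phi /\
      exists l, F l /\ abel_convergent (fun n => p (phi n)) l.

Definition delta_quasi_cauchy (p : nat -> R) : Prop :=
  is_lim_seq (fun n => (p (S (S n)) - p (S n)) - (p (S n) - p n)) 0.

Definition delta_ward_compact (E : R -> Prop) : Prop :=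
  forall p : nat -> R, (forall n, E (p n)) ->
    exists phi, subseq_index phi /\ delta_quasi_cauchy (fun n => p (phi n)).

(* An Abel sequentially compact set is bounded: an unbounded one contains
   points q n with |q n| > 2^n, and along any subsequence the terms of the
   power series at x = 1/2 then fail to tend to 0, so no subsequence is Abel
   convergent.  By Bolzano-Weierstrass every sequence in a bounded set has a
   convergent subsequence, and a convergent sequence is delta-quasi-Cauchy,
   its second differences being combinations of three convergent sequences
   with the same limit. *)

From Stdlib Require Import Reals Lra Lia Classical ClassicalEpsilon.
From Coquelicot Require Import Coquelicot.
Open Scope R_scope.

Lemma subseq_index_ge (phi : nat -> nat) :
  subseq_index phi -> forall k, (k <= phi k)%nat.
Proof.
  intros Hphi k; induction k as [|k IH]; [lia|].
  specialize (Hphi k); lia.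
Qed.

Lemma abel_convergent_eventually_lt_pow2 (p : nat -> R) (l : R) :
  abel_convergent p l -> exists N, forall n, (N <= n)%nat -> Rabs (p n) < 2 ^ n.
Proof.
  intros [Hser _].
  assert (Hlim : is_lim_seq (fun k => p k * (1 / 2) ^ k) 0)
    by (apply ex_series_lim_0, Hser; lra).
  apply is_lim_seq_spec in Hlim.
  destruct (Hlim (mkposreal 1 Rlt_0_1)) as [N HN].
  exists N; intros n Hn; specialize (HN n Hn); simpl in HN.
  assert (Hpow : 0 < 2 ^ n) by (apply pow_lt; lra).
  replace ((1 / 2) ^ n) with (/ 2 ^ n) in HN
    by (unfold Rdiv; rewrite Rmult_1_l, pow_inv; reflexivity).
  rewrite Rminus_0_r, Rabs_mult, Rabs_inv, (Rabs_right (2 ^ n)) in HN by lra.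
  apply (Rmult_lt_reg_r (/ 2 ^ n)); [now apply Rinv_0_lt_compat|].
  rewrite Rinv_r by lra; exact HN.
Qed.

Lemma abel_seq_compact_bounded (F : R -> Prop) :
  abel_seq_compact F -> exists M, forall x, F x -> Rabs x <= M.
Proof.
  intros HF; apply NNPP; intro Hunb.
  assert (Hbig : forall n : nat, exists x, F x /\ 2 ^ n < Rabs x).
  { intro n; apply NNPP; intro Hn; apply Hunb.
    exists (2 ^ n); intros x Fx; apply Rnot_lt_le; intro Hx; eauto. }
  destruct (choice _ Hbig) as [q Hq].
  destruct (HF q (fun n => proj1 (Hq n))) as [phi [Hphi [l [_ Habel]]]].
  destruct (abel_convergent_eventually_lt_pow2 _ _ Habel) as [N HN].
  assert (Hle : 2 ^ N <= 2 ^ phi N)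
    by (apply Rle_pow; [lra | now apply subseq_index_ge]).
  specialize (HN N (Nat.le_refl N)); simpl in HN.
  pose proof (proj2 (Hq (phi N))); lra.
Qed.

Lemma cluster_value_subseq (p : nat -> R) (l : R) :
  (forall (N : nat) (eps : posreal), exists m, (N <= m)%nat /\ Rabs (p m - l) < eps) ->
  exists phi, subseq_index phi /\ is_lim_seq (fun n => p (phi n)) l.
Proof.
  intros Hcl.
  assert (Hinv : forall k, 0 < / INR (S k))
    by (intro k; apply Rinv_0_lt_compat, lt_0_INR; lia).
  destruct (choice (fun (Nk : nat * nat) m =>
             (fst Nk <= m)%nat /\ Rabs (p m - l) < / INR (S (snd Nk))))
    as [g Hg].
  { intros [N k]; exact (Hcl N (mkposreal _ (Hinv k))). }
  (* phi n lies beyond phi (n-1) and within 1/(n+1) of l *)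
  set (phi := fix f n := match n with O => g (O, O) | S n' => g (S (f n'), S n') end).
  assert (Hclose : forall n, Rabs (p (phi n) - l) < / INR (S n))
    by (intros [|n]; [apply (Hg (O, O)) | apply (Hg (S (phi n), S n))]).
  exists phi; split.
  - intro n; destruct (Hg (S (phi n), S n)) as [Hn _]; simpl in *; lia.
  - apply is_lim_seq_spec; intro eps.
    destruct (archimed_cor1 eps (cond_pos eps)) as [N [HN HN0]].
    exists N; intros n Hn.
    apply Rlt_le_trans with (/ INR (S n)); [apply Hclose|].
    apply Rlt_le, Rle_lt_trans with (/ INR N); [|exact HN].
    apply Rinv_le_contravar; [apply lt_0_INR; lia | apply le_INR; lia].
Qed.

Lemma bounded_seq_cvg_subseq (p : nat -> R) (M : R) :
  (forall n, Rabs (p n) <= M) ->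
  exists phi (l : R), subseq_index phi /\ is_lim_seq (fun n => p (phi n)) l.
Proof.
  intros Hb.
  destruct (Bolzano_Weierstrass p (fun c => -M <= c <= M) (compact_P3 (-M) M))
    as [l Hl].
  { intro n; apply Rabs_le_between, Hb. }
  destruct (cluster_value_subseq p l) as [phi Hphi].
  - intros N eps.
    assert (Hnbhd : neighbourhood (disc l eps) l) by (exists eps; intros y Hy; exact Hy).
    destruct (Hl _ N Hnbhd) as [m [Hm Hdisc]].
    exists m; split; [exact Hm | exact Hdisc].
  - exists phi, l; exact Hphi.
Qed.

Lemma is_lim_seq_delta_quasi_cauchy (u : nat -> R) (l : R) :
  is_lim_seq u l -> delta_quasi_cauchy u.
Proof.
  intros Hu.
  assert (Hu1 := proj1 (is_lim_seq_incr_1 u l) Hu).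
  assert (Hu2 := proj1 (is_lim_seq_incr_1 _ l) Hu1); simpl in Hu2.
  unfold delta_quasi_cauchy.
  replace (Finite 0) with (Finite ((l - l) - (l - l))) by (f_equal; ring).
  apply is_lim_seq_minus'; apply is_lim_seq_minus'; assumption.
Qed.

Theorem corollary20 (F : R -> Prop) :
  abel_seq_compact F -> delta_ward_compact F.
Proof.
  intros HF p Hp.
  destruct (abel_seq_compact_bounded F HF) as [M HM].
  destruct (bounded_seq_cvg_subseq p M (fun n => HM _ (Hp n)))
    as [phi [l [Hphi Hl]]].
  exists phi; split; [exact Hphi|].
  exact (is_lim_seq_delta_quasi_cauchy _ l Hl).
Qed.
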